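(* Let $(X,T)$ be a topological dynamical system and let $K$ be a compact subset of $X$. Then $K$ has bounded topological complexity with respect to $\{\hat d_n\}$ if and only if $K$ is equicontinuous in the mean.
   Context: A t.d.s. $(X,T)$ consists of a compact metric space $(X,d)$ and a continuous map $T\colon X\to X$. For $n\in\mathbb{N}$ and $x,y\in X$ let $\bar d_n(x,y)=\frac1n\sum_{i=0}^{n-1}d(T^ix,T^iy)$ and $\hat d_n(x,y)=\max\{\bar d_k(x,y)\colon 1\le k\le n\}$; $B_{\hat d_n}(x,\varepsilon)=\{y\colon \hat d_n(x,y)<\varepsilon\}$. For $K\subset X$, $\widehat{\mathrm{span}}_K(n,\varepsilon)=\min\{\#(F)\colon F\subset K,\ K\subset\bigcup_{x\in F}B_{\hat d_n}(x,\varepsilon)\}$. $K$ has bounded topological complexity with respect to $\{\hat d_n\}$ if for every $\varepsilon>0$ there is a positive integer $C$ with $\widehat{\mathrm{span}}_K(n,\varepsilon)\le C$ for all $n\ge1$. $K$ is equicontinuous in the mean if for every $\varepsilon>0$ there is $\delta>0$ such that $\hat d_n(x,y)<\varepsilon$ for all $n\ge1$ and all $x,y\in K$ with $d(x,y)<\delta$. *)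

From Stdlib Require Import Reals Lra Lia List.
Import ListNotations.
Open Scope R_scope.

Record metric (X : Type) := Metric {
  dist : X -> X -> R;
  dist_nonneg : forall x y, 0 <= dist x y;
  dist_refl : forall x, dist x x = 0;
  dist_eq : forall x y, dist x y = 0 -> x = y;
  dist_sym : forall x y, dist x y = dist y x;
  dist_tri : forall x y z, dist x z <= dist x y + dist y z
}.
Arguments dist {X} _ _ _.

Section MetricNotions.
Context {X : Type} (m : metric X).

Definition open_set (U : X -> Prop) : Prop :=
  forall x, U x -> exists r, 0 < r /\ forall y, dist m x y < r -> U y.

Definition compact_set (K : X -> Prop) : Prop :=
  forall (I : Type) (U : I -> X -> Prop),
    (forall i, open_set (U i)) ->
    (forall x, K x -> exists i, U i x) ->
    exists l : list I, forall x, K x -> exists i, In i l /\ U i x.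

Definition compact_space : Prop := compact_set (fun _ => True).

Definition continuous_map (T : X -> X) : Prop :=
  forall x eps, 0 < eps -> exists delta, 0 < delta /\
    forall y, dist m x y < delta -> dist m (T x) (T y) < eps.

Definition iterT (T : X -> X) (i : nat) (x : X) : X := Nat.iter i T x.

Definition dbar (T : X -> X) (n : nat) (x y : X) : R :=
  / INR n * fold_right Rplus 0 (map (fun i => dist m (iterT T i x) (iterT T i y)) (seq 0 n)).

(* \hat d_n(x,y) = max { \bar d_k(x,y) : 1 <= k <= n }  (all values are >= 0,
   so folding Rmax with initial value 0 gives exactly this maximum for n >= 1). *)
Definition dhat (T : X -> X) (n : nat) (x y : X) : R :=
  fold_right Rmax 0 (map (fun k => dbar T k x y) (seq 1 n)).

(* F (a finite set, as a duplicate-free list) is a subset of K whose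
   \hat d_n-balls of radius eps cover K. *)
Definition hat_spanning (T : X -> X) (K : X -> Prop) (n : nat) (eps : R)
    (F : list X) : Prop :=
  NoDup F /\ (forall x, In x F -> K x) /\
  (forall y, K y -> exists x, In x F /\ dhat T n x y < eps).

Definition hat_span_is (T : X -> X) (K : X -> Prop) (n : nat) (eps : R)
    (s : nat) : Prop :=
  (exists F, hat_spanning T K n eps F /\ length F = s) /\
  (forall F, hat_spanning T K n eps F -> (s <= length F)%nat).

Definition bounded_complexity (T : X -> X) (K : X -> Prop) : Prop :=
  forall eps, 0 < eps -> exists C : nat, (0 < C)%nat /\
    forall n, (1 <= n)%nat -> exists s, hat_span_is T K n eps s /\ (s <= C)%nat.

Definition equicontinuous_in_mean (T : X -> X) (K : X -> Prop) : Prop :=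
  forall eps, 0 < eps -> exists delta, 0 < delta /\
    forall n x y, (1 <= n)%nat -> K x -> K y -> dist m x y < delta ->
      dhat T n x y < eps.

End MetricNotions.

(* If delta is a modulus of equicontinuity in the mean, a finite delta-net of K is
   eps-spanning for every \hat d_n.  Conversely, suppose K has bounded complexity but
   equicontinuity in the mean fails at z with constant e.  Then there are
   points x_1, x_2, ... of K and times n_i with \hat d_{n_i}(z, x_i) >= e, each x_{i+1}
   so close to z that \hat d_{n_j}(z, x_{i+1}) < e/2 for all j <= i (by continuity of T).
   For N >= max n_i the x_i are e/2-separated in \hat d_N, so every e/4-spanning set is
   at least as large as the number of x_i, which is unbounded.  Pointwise equicontinuity
   in the mean on the compact set K is then uniform by a Lebesgue-number argument. *)

From Stdlib Require Import Reals Lra Lia List Classical ClassicalEpsilon.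
Import ListNotations.
Open Scope R_scope.

Lemma fold_Rmax_ge (l : list R) (a : R) : In a l -> a <= fold_right Rmax 0 l.
Proof.
  induction l as [|b l IH]; simpl; [tauto|].
  intros [<-|Ha]; [apply Rmax_l|].
  eapply Rle_trans; [apply IH, Ha|apply Rmax_r].
Qed.

Lemma fold_Rmax_nonneg (l : list R) : 0 <= fold_right Rmax 0 l.
Proof.
  induction l as [|b l IH]; simpl; [lra|].
  eapply Rle_trans; [apply IH|apply Rmax_r].
Qed.

Lemma fold_Rmax_le (l : list R) (b : R) :
  0 <= b -> (forall a, In a l -> a <= b) -> fold_right Rmax 0 l <= b.
Proof.
  intros Hb; induction l as [|a l IH]; simpl; intros Hl; [exact Hb|].
  apply Rmax_lub; auto.
Qed.

Lemma fold_Rmax_lt (l : list R) (b : R) :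
  0 < b -> (forall a, In a l -> a < b) -> fold_right Rmax 0 l < b.
Proof.
  intros Hb; induction l as [|a l IH]; simpl; intros Hl; [exact Hb|].
  apply Rmax_lub_lt; auto.
Qed.

Lemma fold_Rplus_le_add {A : Type} (f g h : A -> R) (l : list A) :
  (forall i, In i l -> f i <= g i + h i) ->
  fold_right Rplus 0 (map f l) <=
    fold_right Rplus 0 (map g l) + fold_right Rplus 0 (map h l).
Proof.
  induction l as [|a l IH]; simpl; intros Hl; [lra|].
  pose proof (Hl a (or_introl eq_refl)).
  pose proof (IH (fun i Hi => Hl i (or_intror Hi))). lra.
Qed.

Lemma fold_Rplus_lt_length {A : Type} (f : A -> R) (b : R) (l : list A) :
  l <> [] -> (forall i, In i l -> f i < b) ->
  fold_right Rplus 0 (map f l) < INR (length l) * b.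
Proof.
  induction l as [|a l IH]; intros Hnil Hl; [easy|].
  cbn [length map fold_right]; rewrite S_INR.
  pose proof (Hl a (or_introl eq_refl)).
  destruct l as [|a' l]; [simpl; lra|].
  pose proof (IH ltac:(discriminate) (fun i Hi => Hl i (or_intror Hi))). lra.
Qed.

Lemma list_common_radius {A : Type} (P : A -> R -> Prop) (l : list A) :
  (forall a d d', 0 < d' <= d -> P a d -> P a d') ->
  (forall a, In a l -> exists d, 0 < d /\ P a d) ->
  exists d, 0 < d /\ forall a, In a l -> P a d.
Proof.
  intros HP; induction l as [|a l IH]; intros Hl.
  - exists 1; split; [lra|easy].
  - destruct (Hl a (or_introl eq_refl)) as [d1 [Hd1 P1]].
    destruct IH as [d2 [Hd2 P2]]; [intros; apply Hl; right; assumption|].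
    assert (Hmin : 0 < Rmin d1 d2) by (apply Rmin_glb_lt; assumption).
    exists (Rmin d1 d2); split; [exact Hmin|].
    intros b [<-|Hb]; eapply HP; eauto; split; auto using Rmin_l, Rmin_r.
Qed.

Lemma ForallOrdPairs_map_impl {A B : Type} (f : A -> B)
    (R : A -> A -> Prop) (S : B -> B -> Prop) (l : list A) :
  (forall a a', In a l -> In a' l -> R a a' -> S (f a) (f a')) ->
  ForallOrdPairs R l -> ForallOrdPairs S (map f l).
Proof.
  intros HRS Hl; induction Hl as [|a l Ha Hl IH]; simpl; constructor.
  - apply Forall_map, Forall_forall; intros a' Ha'.
    apply HRS; [left|right|apply (proj1 (Forall_forall _ _) Ha)]; auto.
  - apply IH; intros; apply HRS; auto; right; assumption.
Qed.

Lemma length_le_of_unshared_cover {A B : Type} (Sep : A -> A -> Prop)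
    (Rel : A -> B -> Prop) (L : list A) (F : list B) :
  (forall a a' b, Sep a a' -> Rel a b -> Rel a' b -> False) ->
  ForallOrdPairs Sep L ->
  (forall a, In a L -> exists b, In b F /\ Rel a b) ->
  (length L <= length F)%nat.
Proof.
  intros Hunshared Hsep Hcov.
  assert (HM : exists M, length M = length L /\ incl M F /\ NoDup M /\
            forall b, In b M -> exists a, In a L /\ Rel a b).
  { induction Hsep as [|a L Ha HL IH].
    - exists []; repeat split; [intros b []|constructor|intros b []].
    - destruct IH as [M [HlenM [HincM [HnodM HwitM]]]];
        [intros; apply Hcov; right; assumption|].
      destruct (Hcov a (or_introl eq_refl)) as [b [HbF Hab]].
      exists (b :: M); repeat split.
      + simpl; lia.
      + intros c [<-|Hc]; auto.
      + constructor; [|exact HnodM]. intros HbM.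
        destruct (HwitM b HbM) as [a' [Ha' Ha'b]].
        exact (Hunshared a a' b (proj1 (Forall_forall _ _) Ha a' Ha') Hab Ha'b).
      + intros c [<-|Hc]; [exists a; split; [left|]; auto|].
        destruct (HwitM c Hc) as [a' [? ?]]; exists a'; split; [right|]; auto. }
  destruct HM as [M [HlenM [HincM [HnodM _]]]].
  rewrite <- HlenM; apply NoDup_incl_length; assumption.
Qed.

Section Pseudometric.
Context {X : Type} (rho : X -> X -> R).
Hypothesis rho_sym : forall x y, rho x y = rho y x.
Hypothesis rho_tri : forall x y z, rho x z <= rho x y + rho y z.

Lemma separated_length_le (r : R) (L F : list X) :
  ForallOrdPairs (fun x x' => 2 * r <= rho x x') L ->
  (forall x, In x L -> exists c, In c F /\ rho c x < r) ->
  (length L <= length F)%nat.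
Proof.
  apply (length_le_of_unshared_cover _ (fun x c => rho c x < r)).
  intros x x' c Hxx' Hcx Hcx'.
  pose proof (rho_tri x c x'); rewrite (rho_sym x c) in *; lra.
Qed.

End Pseudometric.

Section CompactSet.
Context {X : Type} (m : metric X) (K : X -> Prop).
Hypothesis K_compact : compact_set m K.

Lemma open_ball (c : X) (r : R) : open_set m (fun y => dist m c y < r).
Proof.
  intros y Hy; exists (r - dist m c y); split; [lra|].
  intros w Hw; pose proof (dist_tri _ m c y w); lra.
Qed.

Lemma compact_finite_net (r : R) : 0 < r ->
  exists l, (forall x, In x l -> K x) /\
    forall y, K y -> exists x, In x l /\ dist m x y < r.
Proof.
  intros Hr.
  destruct (K_compact {x | K x} (fun c y => dist m (proj1_sig c) y < r))
    as [l Hl].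
  - intros c; apply open_ball.
  - intros x Kx; exists (exist _ x Kx); simpl; rewrite dist_refl; exact Hr.
  - exists (map (@proj1_sig X K) l); split.
    + intros x Hx; apply in_map_iff in Hx as [c [<- _]]; apply proj2_sig.
    + intros y Ky; destruct (Hl y Ky) as [c [Hc Hcy]].
      exists (proj1_sig c); split; [apply in_map|]; assumption.
Qed.

(* Lebesgue-number argument: cover K by the balls of half the pointwise radii. *)
Lemma uniform_equicontinuity_of_pointwise (rho : nat -> X -> X -> R) :
  (forall n x y, rho n x y = rho n y x) ->
  (forall n x y z, rho n x z <= rho n x y + rho n y z) ->
  (forall z, K z -> forall e, 0 < e -> exists d, 0 < d /\
     forall n x, K x -> dist m z x < d -> rho n z x < e) ->
  forall e, 0 < e -> exists d, 0 < d /\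
    forall n x y, K x -> K y -> dist m x y < d -> rho n x y < e.
Proof.
  intros rho_sym rho_tri Hpt e He.
  set (I := {p : X * R | 0 < snd p /\
              forall n x, K x -> dist m (fst p) x < snd p -> rho n (fst p) x < e / 2}).
  destruct (K_compact I (fun p y => dist m (fst (proj1_sig p)) y < snd (proj1_sig p) / 2))
    as [l Hl].
  - intros p; apply open_ball.
  - intros z Kz; destruct (Hpt z Kz (e / 2) ltac:(lra)) as [d [Hd Hz]].
    exists (exist _ (z, d) (conj Hd Hz)); simpl; rewrite dist_refl; lra.
  - destruct (list_common_radius (fun p d => d <= snd (proj1_sig p) / 2) l)
      as [d [Hd Hdl]].
    + intros; lra.
    + intros [[z r] [Hr Hz]] _; exists (r / 2); simpl in *; split; lra.
    + exists d; split; [exact Hd|]. intros n x y Kx Ky Hxy.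
      destruct (Hl x Kx) as [p [Hp Hpx]]; specialize (Hdl p Hp).
      destruct p as [[z r] [Hr Hz]]; simpl in *.
      pose proof (dist_tri _ m z x y).
      pose proof (Hz n x Kx ltac:(lra)); pose proof (Hz n y Ky ltac:(lra)).
      pose proof (rho_tri n x z y); rewrite (rho_sym n x z) in *; lra.
Qed.

End CompactSet.

Section MeanDistances.
Context {X : Type} (m : metric X) (T : X -> X).

Lemma dbar_sym (k : nat) (x y : X) : dbar m T k x y = dbar m T k y x.
Proof. unfold dbar; do 2 f_equal; apply map_ext; intros; apply dist_sym. Qed.

Lemma dhat_sym (n : nat) (x y : X) : dhat m T n x y = dhat m T n y x.
Proof. unfold dhat; f_equal; apply map_ext; intros; apply dbar_sym. Qed.

Lemma dhat_ge0 (n : nat) (x y : X) : 0 <= dhat m T n x y.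
Proof. apply fold_Rmax_nonneg. Qed.

Lemma dbar_tri (k : nat) (x y z : X) : dbar m T k x z <= dbar m T k x y + dbar m T k y z.
Proof.
  unfold dbar; rewrite <- Rmult_plus_distr_l.
  apply Rmult_le_compat_l.
  - destruct k; [simpl; rewrite Rinv_0; lra|].
    apply Rlt_le, Rinv_0_lt_compat, lt_0_INR; lia.
  - apply fold_Rplus_le_add; intros; apply dist_tri.
Qed.

Lemma dhat_tri (n : nat) (x y z : X) : dhat m T n x z <= dhat m T n x y + dhat m T n y z.
Proof.
  unfold dhat at 1; apply fold_Rmax_le.
  - pose proof (dhat_ge0 n x y); pose proof (dhat_ge0 n y z); lra.
  - intros a Ha; apply in_map_iff in Ha as [k [<- Hk]].
    eapply Rle_trans; [apply (dbar_tri k x y z)|].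
    apply Rplus_le_compat; apply fold_Rmax_ge;
      [apply (in_map (fun k => dbar m T k x y))|apply (in_map (fun k => dbar m T k y z))];
      exact Hk.
Qed.

Lemma dhat_le_mono (n N : nat) (x y : X) : (n <= N)%nat -> dhat m T n x y <= dhat m T N x y.
Proof.
  intros HnN; unfold dhat at 1; apply fold_Rmax_le; [apply dhat_ge0|].
  intros a Ha; apply in_map_iff in Ha as [k [<- Hk]].
  apply fold_Rmax_ge, (in_map (fun k => dbar m T k x y)).
  apply in_seq in Hk; apply in_seq; lia.
Qed.

Lemma dhat_lt_of_orbit_dist_lt (n : nat) (x y : X) (eta : R) : 0 < eta ->
  (forall i, (i < n)%nat -> dist m (iterT T i x) (iterT T i y) < eta) ->
  dhat m T n x y < eta.
Proof.
  intros Heta Horb; apply fold_Rmax_lt; [exact Heta|].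
  intros a Ha; apply in_map_iff in Ha as [k [<- Hk]]; apply in_seq in Hk.
  assert (Hk0 : 0 < INR k) by (apply lt_0_INR; lia).
  assert (Hsum : fold_right Rplus 0
                   (map (fun i => dist m (iterT T i x) (iterT T i y)) (seq 0 k))
                 < INR k * eta).
  { replace (INR k) with (INR (length (seq 0 k))) by now rewrite length_seq.
    apply fold_Rplus_lt_length.
    - destruct k; [lia|discriminate].
    - intros i Hi; apply in_seq in Hi; apply Horb; lia. }
  unfold dbar; apply Rmult_lt_reg_l with (INR k); [exact Hk0|].
  rewrite <- Rmult_assoc, Rinv_r by lra; lra.
Qed.

Hypothesis T_continuous : continuous_map m T.

Lemma iterT_continuous (i : nat) (z : X) (eta : R) : 0 < eta -> exists d, 0 < d /\
  forall x, dist m z x < d -> dist m (iterT T i z) (iterT T i x) < eta.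
Proof.
  revert eta; induction i as [|i IH]; intros eta Heta.
  - exists eta; split; auto.
  - destruct (T_continuous (iterT T i z) eta Heta) as [d1 [Hd1 H1]].
    destruct (IH d1 Hd1) as [d [Hd H]].
    exists d; split; [exact Hd|]; intros x Hx; apply H1, H, Hx.
Qed.

Lemma dhat_continuous (n : nat) (z : X) (eta : R) : 0 < eta -> exists d, 0 < d /\
  forall x, dist m z x < d -> dhat m T n z x < eta.
Proof.
  intros Heta.
  destruct (list_common_radius (fun i d => forall x, dist m z x < d ->
              dist m (iterT T i z) (iterT T i x) < eta) (seq 0 n)) as [d [Hd Hiter]].
  - intros i d d' Hd' Hi x Hx; apply Hi; lra.
  - intros i _; apply iterT_continuous, Heta.
  - exists d; split; [exact Hd|]; intros x Hx.
    apply dhat_lt_of_orbit_dist_lt; [exact Heta|].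
    intros i Hi; apply Hiter; [apply in_seq; lia|exact Hx].
Qed.

End MeanDistances.

Section FarPoints.
Context {X : Type} (m : metric X) (T : X -> X) (K : X -> Prop).
Hypothesis T_continuous : continuous_map m T.
Variables (z : X) (e : R).
Hypothesis e_pos : 0 < e.
Hypothesis far_points_near : forall d, 0 < d ->
  exists x n, K x /\ dist m z x < d /\ e <= dhat m T n z x.

Let far (p : X * nat) : Prop := K (fst p) /\ e <= dhat m T (snd p) z (fst p).
Let close_earlier (p q : X * nat) : Prop := dhat m T (snd q) z (fst p) < e / 2.

Lemma far_point_list (k : nat) : exists L, length L = k /\
  Forall far L /\ ForallOrdPairs close_earlier L.
Proof.
  induction k as [|k IH]; [exists []; repeat constructor|].
  destruct IH as [L [HlenL [HfarL HcloseL]]].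
  destruct (list_common_radius (fun q d => forall x, dist m z x < d ->
              dhat m T (snd q) z x < e / 2) L) as [d [Hd Hnear]].
  - intros q d d' Hd' Hq x Hx; apply Hq; lra.
  - intros q _; apply dhat_continuous; [exact T_continuous|lra].
  - destruct (far_points_near d Hd) as [x [n [Kx [Hzx Hfar]]]].
    exists ((x, n) :: L); split; [simpl; lia|split].
    + constructor; [split|]; assumption.
    + constructor; [|exact HcloseL].
      apply Forall_forall; intros q Hq; apply Hnear; assumption.
Qed.

Lemma far_point_list_separated (L : list (X * nat)) (N : nat) :
  Forall far L -> ForallOrdPairs close_earlier L ->
  (forall p, In p L -> (snd p <= N)%nat) ->
  ForallOrdPairs (fun x x' => 2 * (e / 4) <= dhat m T N x x') (map fst L).
Proof.
  intros HfarL HcloseL HN; apply (ForallOrdPairs_map_impl _ close_earlier); auto.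
  intros p q _ Hq Hpq; unfold close_earlier in Hpq.
  destruct (proj1 (Forall_forall _ _) HfarL q Hq) as [_ Hfarq].
  pose proof (dhat_tri m T (snd q) z (fst p) (fst q)).
  pose proof (dhat_le_mono m T (snd q) N (fst p) (fst q) (HN q Hq)); lra.
Qed.

Lemma not_bounded_complexity_of_far_points : ~ bounded_complexity m T K.
Proof.
  intros Hbc; destruct (Hbc (e / 4)) as [C [_ HC]]; [lra|].
  destruct (far_point_list (S C)) as [L [HlenL [HfarL HcloseL]]].
  set (N := S (list_max (map snd L))).
  assert (HN : forall p, In p L -> (snd p <= N)%nat).
  { intros p Hp; pose proof (proj1 (list_max_le (map snd L) _) (le_n _)) as Hmax.
    rewrite Forall_forall in Hmax; specialize (Hmax (snd p) (in_map _ _ _ Hp)).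
    unfold N; lia. }
  destruct (HC N ltac:(unfold N; lia)) as [s [[[F [[_ [_ Hspan]] HlenF]] _] HsC]].
  assert (Hlen : (length (map fst L) <= length F)%nat).
  { apply (separated_length_le (dhat m T N) (dhat_sym m T N) (dhat_tri m T N) (e / 4)).
    - apply far_point_list_separated; assumption.
    - intros x Hx; apply in_map_iff in Hx as [p [<- Hp]].
      apply Hspan, (proj1 (Forall_forall _ _) HfarL p Hp). }
  rewrite length_map in Hlen; lia.
Qed.

End FarPoints.

Lemma hat_span_exists_le {X : Type} (m : metric X) (T : X -> X) (K : X -> Prop)
    (n : nat) (eps : R) (F : list X) :
  hat_spanning m T K n eps F ->
  exists s, hat_span_is m T K n eps s /\ (s <= length F)%nat.
Proof.
  intros HF.
  destruct (Wf_nat.dec_inh_nat_subset_has_unique_least_element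
              (fun s => exists F', hat_spanning m T K n eps F' /\ length F' = s))
    as [s [[Hs Hmin] _]].
  - intros s; apply classic.
  - exists (length F), F; split; [exact HF|reflexivity].
  - exists s; split; [split; [exact Hs|]|]; intros; apply Hmin; eauto.
Qed.

Lemma bounded_complexity_of_equicontinuous_in_mean {X : Type} (m : metric X)
    (T : X -> X) (K : X -> Prop) :
  compact_set m K -> equicontinuous_in_mean m T K -> bounded_complexity m T K.
Proof.
  intros HK Hem eps Heps.
  destruct (Hem eps Heps) as [delta [Hdelta Hmod]].
  destruct (compact_finite_net m K HK delta Hdelta) as [l [HlK Hnet]].
  pose (eq_dec := fun x y : X => excluded_middle_informative (x = y)).
  set (F := nodup eq_dec l).
  exists (S (length F)); split; [lia|]; intros n Hn.
  assert (HF : hat_spanning m T K n eps F).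
  { split; [apply NoDup_nodup|split].
    - intros x Hx; apply HlK, (nodup_In eq_dec l x), Hx.
    - intros y Ky; destruct (Hnet y Ky) as [x [Hx Hxy]].
      exists x; split; [apply (nodup_In eq_dec), Hx|apply Hmod; auto]. }
  destruct (hat_span_exists_le m T K n eps F HF) as [s [Hs HsF]].
  exists s; split; [exact Hs|lia].
Qed.

Lemma pointwise_equicontinuous_in_mean_of_bounded_complexity {X : Type}
    (m : metric X) (T : X -> X) (K : X -> Prop) :
  continuous_map m T -> bounded_complexity m T K ->
  forall z e, 0 < e -> exists d, 0 < d /\
    forall n x, K x -> dist m z x < d -> dhat m T n z x < e.
Proof.
  intros HT Hbc z e He; apply NNPP; intros Hno.
  apply (not_bounded_complexity_of_far_points m T K HT z e He); [|exact Hbc].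
  intros d Hd; apply NNPP; intros Hnone; apply Hno.
  exists d; split; [exact Hd|]; intros n x Kx Hzx.
  apply Rnot_le_lt; intros Hle; apply Hnone; exists x, n; auto.
Qed.

Theorem mainTheorem3 (X : Type) (m : metric X) (T : X -> X)
  (HX : compact_space m) (HT : continuous_map m T)
  (K : X -> Prop) (HK : compact_set m K) :
  bounded_complexity m T K <-> equicontinuous_in_mean m T K.
Proof.
  split.
  - intros Hbc e He.
    destruct (uniform_equicontinuity_of_pointwise m K HK (dhat m T)
                (dhat_sym m T) (dhat_tri m T)
                (fun z _ => pointwise_equicontinuous_in_mean_of_bounded_complexity
                              m T K HT Hbc z) e He) as [d [Hd Hmod]].
    exists d; split; [exact Hd|]; intros n x y _; apply Hmod.
  - apply bounded_complexity_of_equicontinuous_in_mean, HK.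
Qed.
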